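(* Let $\mathbf{S}$ be any one of the four systems $\mathbf{G3N}$, $\mathbf{G3NeF}$, $\mathbf{G3CoPC}$, $\mathbf{G3MPC}$. Let $\Gamma,\Delta$ be finite multisets of formulas and $\varphi$ a formula such that the common language of $\Gamma$ and $\Delta,\varphi$ is non-empty. If $\Gamma,\Delta\Rightarrow\varphi$ is derivable in $\mathbf{S}$, then there exists a formula $\sigma$ such that (1) every propositional variable occurring in $\sigma$ belongs to the common language of $\Gamma$ and $\Delta,\varphi$, and (2) both $\Gamma\Rightarrow\sigma$ and $\Delta,\sigma\Rightarrow\varphi$ are derivable in $\mathbf{S}$.
   Context: Formulas are generated from a countable set of propositional variables $p,q,\dots$ and the constant $\top$ by the grammar $\varphi::= p\mid\top\mid\varphi\wedge\varphi\mid\varphi\vee\varphi\mid\varphi\to\varphi\mid\neg\varphi$ (there is no constant $\bot$). $\varphi\leftrightarrow\psi$ abbreviates $(\varphi\to\psi)\wedge(\psi\to\varphi)$. A sequent is an expression $\Gamma\Rightarrow\varphi$ where $\Gamma$ is a finite multiset of formulas and $\varphi$ is a formula (the goal); $\Gamma,\Delta$ denotes multiset union and $\Gamma,\alpha$ denotes $\Gamma$ with one more occurrence of $\alpha$. Rules ($p$ a propositional variable): (ax) $\Gamma,p\Rightarrow p$ (no premises); ($\top$) $\Gamma\Rightarrow\top$ (no premises); ($\to$r) from $\Gamma,\alpha\Rightarrow\beta$ infer $\Gamma\Rightarrow\alpha\to\beta$; ($\to$l) from $\Gamma,\alpha\to\beta\Rightarrow\alpha$ and $\Gamma,\beta\Rightarrow\varphi$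 infer $\Gamma,\alpha\to\beta\Rightarrow\varphi$; ($\wedge$r) from $\Gamma\Rightarrow\alpha$ and $\Gamma\Rightarrow\beta$ infer $\Gamma\Rightarrow\alpha\wedge\beta$; ($\wedge$l) from $\Gamma,\alpha,\beta\Rightarrow\varphi$ infer $\Gamma,\alpha\wedge\beta\Rightarrow\varphi$; ($\vee$r$_1$), ($\vee$r$_2$) from $\Gamma\Rightarrow\alpha$ (resp. $\Gamma\Rightarrow\beta$) infer $\Gamma\Rightarrow\alpha\vee\beta$; ($\vee$l) from $\Gamma,\alpha\Rightarrow\varphi$ and $\Gamma,\beta\Rightarrow\varphi$ infer $\Gamma,\alpha\vee\beta\Rightarrow\varphi$; (n) from $\Gamma,\neg\alpha,\beta\Rightarrow\alpha$ and $\Gamma,\neg\alpha,\alpha\Rightarrow\beta$ infer $\Gamma,\neg\alpha\Rightarrow\neg\beta$; (nef) from $\Gamma,\neg\alpha\Rightarrow\alpha$ infer $\Gamma,\neg\alpha\Rightarrow\neg\beta$; (copc) from $\Gamma,\neg\alpha,\beta\Rightarrow\alpha$ infer $\Gamma,\neg\alpha\Rightarrow\neg\beta$; (an) from $\Gamma,\alpha\Rightarrow\neg\alpha$ infer $\Gamma\Rightarrow\neg\alpha$. The rules (ax) through ($\vee$l) are the positive rules. The four systems are: $\mathbf{G3N}$ = positive rules + (n); $\mathbf{G3NeF}$ = positive rules + (n) + (nef); $\mathbf{G3CoPC}$ = positive rules + (copc); $\mathbf{G3MPC}$ = positive rules + (copc) + (an). None of them contains weakening, contraction or cut as a rule. A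 derivation is a finite tree of rule instances with leaves instances of (ax) or ($\top$); its height is the number of inference steps on a longest branch. A sequent is derivable if it has a derivation; a formula $\varphi$ is a theorem if $\Rightarrow\varphi$ (empty antecedent) is derivable. The common language of two multisets of formulas $\Gamma$ and $\Delta'$ is the set of propositional variables that occur both in some formula of $\Gamma$ and in some formula of $\Delta'$; here $\Delta'$ is $\Delta$ together with $\varphi$. *)

From Stdlib Require Import List Permutation.
Import ListNotations.

Inductive formula : Type :=
| Var : nat -> formula
| Top : formula
| And : formula -> formula -> formula
| Or  : formula -> formula -> formula
| Imp : formula -> formula -> formula
| Neg : formula -> formula.

Fixpoint vars (f : formula) : list nat :=
  match f with
  | Var p => [p]
  | Top => []
  | And a b | Or a b | Imp a b => vars a ++ vars b
  | Neg a => vars a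
  end.

Definition occurs (p : nat) (f : formula) : Prop := In p (vars f).

Definition occurs_in (p : nat) (G : list formula) : Prop :=
  exists f, In f G /\ occurs p f.

Definition common_lang (G D : list formula) (phi : formula) (p : nat) : Prop :=
  occurs_in p G /\ occurs_in p (phi :: D).

Inductive system : Type := G3N | G3NeF | G3CoPC | G3MPC.

Definition has_n (S : system) : bool :=
  match S with G3N | G3NeF => true | _ => false end.
Definition has_nef (S : system) : bool :=
  match S with G3NeF => true | _ => false end.
Definition has_copc (S : system) : bool :=
  match S with G3CoPC | G3MPC => true | _ => false end.
Definition has_an (S : system) : bool :=
  match S with G3MPC => true | _ => false end.

(* Derivability of the sequent G => phi in system S.  Antecedents are
   multisets, represented by lists; a conclusion "Gamma, alpha" is any list
   that is a permutation of alpha :: Gamma. *)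
Inductive deriv (S : system) : list formula -> formula -> Prop :=
| r_ax : forall G G' p, Permutation G' (Var p :: G) -> deriv S G' (Var p)
| r_top : forall G, deriv S G Top
| r_impR : forall G a b, deriv S (a :: G) b -> deriv S G (Imp a b)
| r_impL : forall G G' a b phi, Permutation G' (Imp a b :: G) ->
    deriv S (Imp a b :: G) a -> deriv S (b :: G) phi -> deriv S G' phi
| r_andR : forall G a b, deriv S G a -> deriv S G b -> deriv S G (And a b)
| r_andL : forall G G' a b phi, Permutation G' (And a b :: G) ->
    deriv S (a :: b :: G) phi -> deriv S G' phi
| r_orR1 : forall G a b, deriv S G a -> deriv S G (Or a b)
| r_orR2 : forall G a b, deriv S G b -> deriv S G (Or a b)
| r_orL : forall G G' a b phi, Permutation G' (Or a b :: G) ->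
    deriv S (a :: G) phi -> deriv S (b :: G) phi -> deriv S G' phi
| r_n : forall G G' a b, has_n S = true -> Permutation G' (Neg a :: G) ->
    deriv S (Neg a :: b :: G) a -> deriv S (Neg a :: a :: G) b ->
    deriv S G' (Neg b)
| r_nef : forall G G' a b, has_nef S = true -> Permutation G' (Neg a :: G) ->
    deriv S (Neg a :: G) a -> deriv S G' (Neg b)
| r_copc : forall G G' a b, has_copc S = true -> Permutation G' (Neg a :: G) ->
    deriv S (Neg a :: b :: G) a -> deriv S G' (Neg b)
| r_an : forall G a, has_an S = true ->
    deriv S (a :: G) (Neg a) -> deriv S G (Neg a).

From Stdlib Require Import List Permutation Lia.
Import ListNotations.

(* Every derivation of  X, Y => phi  yields an interpolant sigma with
   X => sigma  and  sigma, Y => phi  whose variables are common to X and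
   (Y, phi); the proof is by induction on the derivation, each rule giving a
   way to combine the interpolants of its premises (one lemma per rule and per
   side of the split on which its principal formula lies).

   Almost all cases only use the rules themselves plus weakening and the
   identity sequent.  The one exception is rule (n) with its principal formula
   on the X side, whose interpolant is combined by cuts; so the file first
   proves the structural facts (exchange/weakening, identity, invertibility of
   the left rules and of the right rules for -> and /\) and then cut
   admissibility, by the usual double induction on the cut formula and on the
   derivation of the right premise. *)

Definition formula_eq_dec : forall x y : formula, {x = y} + {x <> y}.
Proof. decide equality; apply PeanoNat.Nat.eq_dec. Defined.

Lemma count_occ_cons_split (a x : formula) (l : list formula) :
  count_occ formula_eq_dec (a :: l) x =
  (if formula_eq_dec a x then 1 else 0) + count_occ formula_eq_dec l x.
Proof. simpl. destruct (formula_eq_dec a x); reflexivity. Qed.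

Ltac perm_solve :=
  let x := fresh "x" in
  apply (Permutation_count_occ formula_eq_dec); intro x;
  repeat match goal with H : Permutation _ _ |- _ =>
    let h := fresh "h" in
    pose proof (proj1 (Permutation_count_occ formula_eq_dec _ _) H x) as h; clear H
  end;
  repeat rewrite ?count_occ_app, ?count_occ_cons_split, ?count_occ_nil in *;
  repeat match goal with
  | |- context [formula_eq_dec ?a ?b] => destruct (formula_eq_dec a b)
  | H : context [formula_eq_dec ?a ?b] |- _ => destruct (formula_eq_dec a b)
  end;
  lia.

Lemma perm_cons_cases (A B : formula) G K : Permutation (A :: G) (B :: K) ->
  (A = B /\ Permutation G K) \/
  (exists G1, Permutation K (A :: G1) /\ Permutation G (B :: G1)).
Proof.
  intro H. destruct (formula_eq_dec A B) as [<-|NE].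
  - left. split; [reflexivity|]. exact (Permutation_cons_inv H).
  - right.
    assert (HB : In B G).
    { destruct (Permutation_in B (Permutation_sym H) (in_eq B K)); [congruence|assumption]. }
    destruct (in_split _ _ HB) as [l1 [l2 ->]].
    exists (l1 ++ l2). split; [|apply Permutation_sym, Permutation_middle].
    apply (Permutation_cons_inv (a := B)).
    apply Permutation_sym. eapply perm_trans; [|exact H]. perm_solve.
Qed.

Lemma perm_cons_app_cases (A : formula) G X Y : Permutation (A :: G) (X ++ Y) ->
  (exists X0, Permutation X (A :: X0) /\ Permutation G (X0 ++ Y)) \/
  (exists Y0, Permutation Y (A :: Y0) /\ Permutation G (X ++ Y0)).
Proof.
  intro H.
  destruct (in_app_or _ _ _ (Permutation_in A H (in_eq A G))) as [HA|HA];
    destruct (in_split _ _ HA) as [l1 [l2 ->]]; [left|right];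
    exists (l1 ++ l2); (split; [apply Permutation_sym, Permutation_middle|]);
    apply (Permutation_cons_inv (a := A)); (eapply perm_trans; [exact H|perm_solve]).
Qed.

Ltac deriv_induction H :=
  induction H as [G G0 p Hp|G|G a b d IH|G G0 a b phi Hp d1 IH1 d2 IH2
   |G a b d1 IH1 d2 IH2|G G0 a b phi Hp d IH|G a b d IH|G a b d IH
   |G G0 a b phi Hp d1 IH1 d2 IH2|G G0 a b Hf Hp d1 IH1 d2 IH2
   |G G0 a b Hf Hp d IH|G G0 a b Hf Hp d IH|G a Hf d IH].

Lemma weakening S G phi : deriv S G phi ->
  forall L G', Permutation (L ++ G) G' -> deriv S G' phi.
Proof.
  intro D; deriv_induction D; intros L G' HL.
  - apply r_ax with (L ++ G); perm_solve.
  - apply r_top.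
  - apply r_impR, (IH L); perm_solve.
  - apply r_impL with (L ++ G) a b; [perm_solve|apply (IH1 L)|apply (IH2 L)]; perm_solve.
  - apply r_andR; [apply (IH1 L)|apply (IH2 L)]; perm_solve.
  - apply r_andL with (L ++ G) a b; [|apply (IH L)]; perm_solve.
  - apply r_orR1, (IH L); perm_solve.
  - apply r_orR2, (IH L); perm_solve.
  - apply r_orL with (L ++ G) a b; [perm_solve|apply (IH1 L)|apply (IH2 L)]; perm_solve.
  - apply r_n with (L ++ G) a; [exact Hf|perm_solve|apply (IH1 L)|apply (IH2 L)]; perm_solve.
  - apply r_nef with (L ++ G) a; [exact Hf|perm_solve|apply (IH L)]; perm_solve.
  - apply r_copc with (L ++ G) a; [exact Hf|perm_solve|apply (IH L)]; perm_solve.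
  - apply r_an; [exact Hf|apply (IH L)]; perm_solve.
Qed.
Arguments weakening {S G phi}.

Lemma exchange S G G' phi : deriv S G phi -> Permutation G G' -> deriv S G' phi.
Proof. intro D. exact (weakening D [] G'). Qed.
Arguments exchange {S G G' phi}.

Lemma identity S A : forall G, deriv S (A :: G) A.
Proof.
  induction A as [p| |a IHa b IHb|a IHa b IHb|a IHa b IHb|a IHa]; intro G.
  - apply r_ax with G; reflexivity.
  - apply r_top.
  - apply r_andL with G a b; [reflexivity|].
    apply r_andR; [apply IHa|apply (exchange (IHb (a :: G))); perm_solve].
  - apply r_orL with G a b; [reflexivity|apply r_orR1, IHa|apply r_orR2, IHb].
  - apply r_impR, r_impL with (a :: G) a b; [perm_solve| |apply IHb].
    apply (exchange (IHa (Imp a b :: G))); perm_solve.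
  - (* both kinds of negation rule derive  Neg a, G => Neg a  from  a, Neg a, G => a *)
    assert (Ha : deriv S (Neg a :: a :: G) a) by (apply (exchange (IHa (Neg a :: G))); perm_solve).
    destruct S; solve [ apply r_n with G a; auto | apply r_copc with G a; auto ].
Qed.

(* The left rules for /\, \/ and the right premise of the left rule for ->
   are invertible: the principal formula A may be replaced by L whenever
   left_inv A L. *)
Inductive left_inv : formula -> list formula -> Prop :=
| li_and a b : left_inv (And a b) [a; b]
| li_or1 a b : left_inv (Or a b) [a]
| li_or2 a b : left_inv (Or a b) [b]
| li_imp a b : left_inv (Imp a b) [b].

Lemma left_inversion S ctx phi : deriv S ctx phi ->
  forall A L K, left_inv A L -> Permutation ctx (A :: K) -> deriv S (L ++ K) phi.
Proof.
  intro D; deriv_induction D; intros A L K HA HK;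
    try (destruct (perm_cons_cases _ _ _ _ (perm_trans (Permutation_sym Hp) HK))
           as [[<- HG]|[G1 [HK1 HG1]]]).
  - inversion HA.
  - apply r_ax with (L ++ G1); perm_solve.
  - apply r_top.
  - apply r_impR. apply (exchange (IH A L (a :: K) HA ltac:(perm_solve))); perm_solve.
  - inversion HA; subst. apply (exchange d2); perm_solve.
  - apply r_impL with (L ++ G1) a b; [perm_solve| |].
    + apply (exchange (IH1 A L (Imp a b :: G1) HA ltac:(perm_solve))); perm_solve.
    + apply (exchange (IH2 A L (b :: G1) HA ltac:(perm_solve))); perm_solve.
  - apply r_andR; [apply (IH1 A)|apply (IH2 A)]; assumption.
  - inversion HA; subst. apply (exchange d); perm_solve.
  - apply r_andL with (L ++ G1) a b; [perm_solve|].
    apply (exchange (IH A L (a :: b :: G1) HA ltac:(perm_solve))); perm_solve.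
  - apply r_orR1, (IH A); assumption.
  - apply r_orR2, (IH A); assumption.
  - inversion HA; subst; [apply (exchange d1)|apply (exchange d2)]; perm_solve.
  - apply r_orL with (L ++ G1) a b; [perm_solve| |].
    + apply (exchange (IH1 A L (a :: G1) HA ltac:(perm_solve))); perm_solve.
    + apply (exchange (IH2 A L (b :: G1) HA ltac:(perm_solve))); perm_solve.
  - inversion HA.
  - apply r_n with (L ++ G1) a; [exact Hf|perm_solve| |].
    + apply (exchange (IH1 A L (Neg a :: b :: G1) HA ltac:(perm_solve))); perm_solve.
    + apply (exchange (IH2 A L (Neg a :: a :: G1) HA ltac:(perm_solve))); perm_solve.
  - inversion HA.
  - apply r_nef with (L ++ G1) a; [exact Hf|perm_solve|].
    apply (exchange (IH A L (Neg a :: G1) HA ltac:(perm_solve))); perm_solve.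
  - inversion HA.
  - apply r_copc with (L ++ G1) a; [exact Hf|perm_solve|].
    apply (exchange (IH A L (Neg a :: b :: G1) HA ltac:(perm_solve))); perm_solve.
  - apply r_an; [exact Hf|].
    apply (exchange (IH A L (a :: K) HA ltac:(perm_solve))); perm_solve.
Qed.

Lemma imp_right_inversion S G x y : deriv S G (Imp x y) -> deriv S (x :: G) y.
Proof.
  remember (Imp x y) as f eqn:E. intro D; deriv_induction D; try discriminate.
  - injection E as -> ->. exact d.
  - apply r_impL with (x :: G) a b; [perm_solve|apply (weakening d1 [x]); perm_solve|].
    apply (exchange (IH2 E)); perm_solve.
  - apply r_andL with (x :: G) a b; [perm_solve|apply (exchange (IH E)); perm_solve].
  - apply r_orL with (x :: G) a b; [perm_solve|apply (exchange (IH1 E))|apply (exchange (IH2 E))];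
      perm_solve.
Qed.

Lemma and_right_inversion S G x y : deriv S G (And x y) -> deriv S G x /\ deriv S G y.
Proof.
  remember (And x y) as f eqn:E. intro D; deriv_induction D; try discriminate.
  - destruct (IH2 E). split; apply r_impL with G a b; assumption.
  - injection E as -> ->. split; assumption.
  - destruct (IH E). split; apply r_andL with G a b; assumption.
  - destruct (IH1 E), (IH2 E). split; apply r_orL with G a b; assumption.
Qed.

Definition cut_admissible S A :=
  forall G phi, deriv S G A -> deriv S (A :: G) phi -> deriv S G phi.

(* When the cut formula is principal in the right premise by a left rule
   for \/ or for negation, the left premise is non-invertible: the cut is
   pushed upwards through the left rules ending the left premise until the
   right rule introducing the cut formula is reached.  What is carried along
   is a family R of side derivations  E, G => y  with G the varying context;
   derives_all S R G says that all of them hold. *)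
Definition derives_all S (R : list (list formula * formula)) (G : list formula) :=
  Forall (fun r => deriv S (fst r ++ G) (snd r)) R.

Lemma derives_all_one S E y G : deriv S (E ++ G) y -> derives_all S [(E, y)] G.
Proof. intro D. repeat constructor. exact D. Qed.

Lemma derives_all_two S E1 y1 E2 y2 G : deriv S (E1 ++ G) y1 -> deriv S (E2 ++ G) y2 ->
  derives_all S [(E1, y1); (E2, y2)] G.
Proof. intros D1 D2. apply Forall_cons; [exact D1|apply derives_all_one, D2]. Qed.

Lemma derives_all_weaken S R G L G' :
  derives_all S R G -> Permutation (L ++ G) G' -> derives_all S R G'.
Proof.
  intros HR HP. refine (Forall_impl _ _ HR). intros [E y] Dy.
  apply (weakening Dy L); simpl. perm_solve.
Qed.

Lemma derives_all_left_inv S R A L G G' : left_inv A L ->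
  Permutation G' (A :: G) -> derives_all S R G' -> derives_all S R (L ++ G).
Proof.
  intros HA HP HR. refine (Forall_impl _ _ HR). intros [E y] Dy; simpl in *.
  apply (exchange (left_inversion _ _ _ Dy A L (E ++ G) HA ltac:(perm_solve))).
  perm_solve.
Qed.

Lemma impL_commutes S R psi G G' a b : Permutation G' (Imp a b :: G) ->
  deriv S (Imp a b :: G) a ->
  (derives_all S R (b :: G) -> deriv S (b :: G) psi) ->
  derives_all S R G' -> deriv S G' psi.
Proof.
  intros HP Da IH HR. apply r_impL with G a b; [exact HP|exact Da|].
  apply IH, (derives_all_left_inv _ _ _ [b] G G' (li_imp a b) HP HR).
Qed.

Lemma andL_commutes S R psi G G' a b : Permutation G' (And a b :: G) ->
  (derives_all S R (a :: b :: G) -> deriv S (a :: b :: G) psi) ->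
  derives_all S R G' -> deriv S G' psi.
Proof.
  intros HP IH HR. apply r_andL with G a b; [exact HP|].
  apply IH, (derives_all_left_inv _ _ _ [a; b] G G' (li_and a b) HP HR).
Qed.

Lemma orL_commutes S R psi G G' a b : Permutation G' (Or a b :: G) ->
  (derives_all S R (a :: G) -> deriv S (a :: G) psi) ->
  (derives_all S R (b :: G) -> deriv S (b :: G) psi) ->
  derives_all S R G' -> deriv S G' psi.
Proof.
  intros HP IHa IHb HR. apply r_orL with G a b; [exact HP| |].
  - apply IHa, (derives_all_left_inv _ _ _ [a] G G' (li_or1 a b) HP HR).
  - apply IHb, (derives_all_left_inv _ _ _ [b] G G' (li_or2 a b) HP HR).
Qed.

Ltac use_ih E := match goal with H : _ -> ?P |- ?P => exact (H E) end.
Ltac left_rules_commute E :=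
  first [ eapply impL_commutes; [eassumption|eassumption| |eassumption]; use_ih E
        | eapply andL_commutes; [eassumption| |eassumption]; use_ih E
        | eapply orL_commutes; [eassumption| | |eassumption]; use_ih E ].

Lemma or_cut S c1 c2 : cut_admissible S c1 -> cut_admissible S c2 ->
  forall G psi, deriv S G (Or c1 c2) ->
  derives_all S [([c1], psi); ([c2], psi)] G -> deriv S G psi.
Proof.
  intros C1 C2 G psi D. remember (Or c1 c2) as f eqn:E.
  deriv_induction D; intro HR; try discriminate; try left_rules_commute E.
  - injection E as -> ->. exact (C1 _ _ d (Forall_inv HR)).
  - injection E as -> ->. exact (C2 _ _ d (Forall_inv (Forall_inv_tail HR))).
Qed.

(* In the
   systems having (n), the left premise's Neg c comes from (n) or (nef). *)
Lemma neg_cut_n S c beta : has_n S = true -> cut_admissible S c ->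
  forall G, deriv S G (Neg c) ->
  derives_all S [([beta], c); ([c], beta)] G -> deriv S G (Neg beta).
Proof.
  intros Hn C G D. remember (Neg c) as f eqn:E.
  deriv_induction D; intro HR; try discriminate; try left_rules_commute E;
    try (destruct S; discriminate).
  - injection E as ->.
    pose proof (Forall_inv HR) as Hbe; pose proof (Forall_inv (Forall_inv_tail HR)) as Hc.
    simpl in Hbe, Hc. apply r_n with G a; [exact Hf|exact Hp| |].
    + apply C; [apply (exchange Hbe); perm_solve|apply (weakening d1 [beta]); perm_solve].
    + apply C; [exact d2|apply (weakening Hc [a]); perm_solve].
  - apply r_nef with G a; assumption.
Qed.

Lemma neg_cut_nef S c beta : has_nef S = true -> cut_admissible S c ->
  forall G, deriv S G (Neg c) -> derives_all S [([], c)] G -> deriv S G (Neg beta).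
Proof.
  intros Hnef C G D. remember (Neg c) as f eqn:E.
  deriv_induction D; intro HR; try discriminate; try left_rules_commute E;
    try (destruct S; discriminate).
  - injection E as ->. pose proof (Forall_inv HR) as Hc; simpl in Hc.
    apply r_nef with G a; [exact Hnef|exact Hp|].
    apply C; [apply (exchange Hc); perm_solve|apply (exchange d1); perm_solve].
  - apply r_nef with G a; assumption.
Qed.

(* Principal cut on Neg c introduced by (copc) in the right premise, whose
   premise, cut-free already, is  beta, G => c; here the left premise may also
   end with (an). *)
Lemma neg_cut_copc S c beta : has_copc S = true -> cut_admissible S c ->
  forall G, deriv S G (Neg c) -> derives_all S [([beta], c)] G -> deriv S G (Neg beta).
Proof.
  intros Hcopc C G D. remember (Neg c) as f eqn:E.
  deriv_induction D; intro HR; try discriminate; try left_rules_commute E;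
    try (destruct S; discriminate).
  - injection E as ->. pose proof (Forall_inv HR) as Hbe; simpl in Hbe.
    apply r_copc with G a; [exact Hcopc|exact Hp|].
    apply C; [apply (exchange Hbe); perm_solve|apply (weakening d [beta]); perm_solve].
  - injection E as ->. pose proof (Forall_inv HR) as Hbe; simpl in Hbe.
    assert (Hc : deriv S (c :: G) (Neg beta)).
    { apply IH; [reflexivity|apply (derives_all_weaken _ _ _ [c] _ HR); reflexivity]. }
    apply r_an; [exact Hf|].
    apply C; [exact Hbe|apply (weakening Hc [beta]); perm_solve].
Qed.

(* Principal cuts on an implication and on a conjunction, reduced to cuts on
   their components by invertibility of the right rules. *)
Lemma imp_cut S a b G psi : cut_admissible S a -> cut_admissible S b ->
  deriv S G (Imp a b) -> deriv S G a -> deriv S (b :: G) psi -> deriv S G psi.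
Proof.
  intros Ca Cb Dab Da Db. apply (Cb _ _ (Ca _ _ Da (imp_right_inversion _ _ _ _ Dab)) Db).
Qed.

Lemma and_cut S a b G psi : cut_admissible S a -> cut_admissible S b ->
  deriv S G (And a b) -> deriv S (a :: b :: G) psi -> deriv S G psi.
Proof.
  intros Ca Cb Dab D. destruct (and_right_inversion _ _ _ _ Dab) as [Da Db].
  apply (Ca _ _ Da), Cb; [apply (weakening Db [a]); perm_solve|apply (exchange D); perm_solve].
Qed.

Definition subformula_cuts S A :=
  match A with
  | And a b | Or a b | Imp a b => cut_admissible S a /\ cut_admissible S b
  | Neg a => cut_admissible S a
  | _ => True
  end.

Lemma cut_reduction S A : subformula_cuts S A -> forall ctx phi, deriv S ctx phi ->
  forall K, Permutation ctx (A :: K) -> deriv S K A -> deriv S K phi.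
Proof.
  intros Hsub ctx phi D; deriv_induction D; intros K HK HA;
    try (destruct (perm_cons_cases _ _ _ _ (perm_trans (Permutation_sym Hp) HK))
           as [[<- HG]|[G1 [HK1 HG1]]]; simpl in Hsub).
  - exact HA.
  - apply r_ax with G1; perm_solve.
  - apply r_top.
  - apply r_impR, IH; [perm_solve|apply (weakening HA [a]); perm_solve].
  - destruct Hsub as [Ca Cb]. apply (imp_cut S a b K phi Ca Cb HA).
    + apply IH1; [perm_solve|exact HA].
    + apply (exchange d2); perm_solve.
  - apply r_impL with G1 a b; [perm_solve|apply IH1|apply IH2]; [perm_solve| |perm_solve|].
    + apply (exchange HA); perm_solve.
    + exact (left_inversion _ _ _ HA _ [b] _ (li_imp a b) HK1).
  - apply r_andR; [apply IH1|apply IH2]; assumption.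
  - destruct Hsub as [Ca Cb]. apply (and_cut S a b K phi Ca Cb HA).
    apply (exchange d); perm_solve.
  - apply r_andL with G1 a b; [perm_solve|apply IH; [perm_solve|]].
    exact (left_inversion _ _ _ HA _ [a; b] _ (li_and a b) HK1).
  - apply r_orR1, IH; assumption.
  - apply r_orR2, IH; assumption.
  - destruct Hsub as [Ca Cb]. apply (or_cut S a b Ca Cb K phi HA).
    apply derives_all_two; [apply (exchange d1)|apply (exchange d2)]; perm_solve.
  - apply r_orL with G1 a b; [perm_solve|apply IH1|apply IH2]; [perm_solve| |perm_solve|].
    + exact (left_inversion _ _ _ HA _ [a] _ (li_or1 a b) HK1).
    + exact (left_inversion _ _ _ HA _ [b] _ (li_or2 a b) HK1).
  - apply (neg_cut_n S a b Hf Hsub K HA).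
    apply derives_all_two; [apply IH1|apply IH2]; [perm_solve| |perm_solve|].
    + apply (weakening HA [b]); reflexivity.
    + apply (weakening HA [a]); reflexivity.
  - apply r_n with G1 a; [exact Hf|perm_solve|apply IH1|apply IH2]; [perm_solve| |perm_solve|].
    + apply (weakening HA [b]); perm_solve.
    + apply (weakening HA [a]); perm_solve.
  - apply (neg_cut_nef S a b Hf Hsub K HA).
    apply derives_all_one, IH; [perm_solve|exact HA].
  - apply r_nef with G1 a; [exact Hf|perm_solve|apply IH; [perm_solve|]].
    apply (exchange HA); perm_solve.
  - apply (neg_cut_copc S a b Hf Hsub K HA).
    apply derives_all_one, IH; [perm_solve|apply (weakening HA [b]); reflexivity].
  - apply r_copc with G1 a; [exact Hf|perm_solve|apply IH; [perm_solve|]].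
    apply (weakening HA [b]); perm_solve.
  - apply r_an; [exact Hf|apply IH; [perm_solve|apply (weakening HA [a]); reflexivity]].
Qed.

Theorem cut_admissibility S A : cut_admissible S A.
Proof.
  induction A; intros G phi HL HR;
    (eapply cut_reduction; [|exact HR|reflexivity|exact HL]); simpl; auto.
Qed.

Definition interpolant S X Y phi sigma :=
  (forall p, occurs p sigma -> common_lang X Y phi p) /\
  deriv S X sigma /\ deriv S (sigma :: Y) phi.

Definition interpolable S X Y phi := exists sigma, interpolant S X Y phi sigma.

Lemma occurs_in_iff p X : occurs_in p X <-> In p (flat_map vars X).
Proof. unfold occurs_in, occurs. rewrite in_flat_map. reflexivity. Qed.

Lemma occurs_in_perm p X X' : occurs_in p X -> Permutation X X' -> occurs_in p X'.
Proof. intros [f [Hf Hp]] HX. exists f. split; [exact (Permutation_in f HX Hf)|exact Hp]. Qed.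

Ltac vocabulary :=
  let p := fresh "p" in let Hp := fresh "Hp" in
  intros p Hp;
  repeat match goal with H : forall q, occurs q _ -> common_lang _ _ _ q |- _ =>
    specialize (H p) end;
  unfold common_lang, occurs in *; rewrite ?occurs_in_iff in *; simpl in *;
  rewrite ?in_app_iff in *; simpl in *; tauto.

Lemma interpolable_perm S X Y X' Y' phi : interpolable S X Y phi ->
  Permutation X X' -> Permutation Y Y' -> interpolable S X' Y' phi.
Proof.
  intros [s [Hv [D1 D2]]] HX HY. exists s. split; [|split].
  - intros p Hp. destruct (Hv p Hp) as [HpX HpY].
    split; [exact (occurs_in_perm _ _ _ HpX HX)|].
    exact (occurs_in_perm _ _ _ HpY (perm_skip phi HY)).
  - exact (exchange D1 HX).
  - apply (exchange D2); perm_solve.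
Qed.

Lemma interp_from_right S X Y phi : deriv S Y phi -> interpolable S X Y phi.
Proof.
  intro D. exists Top. split; [intros p []|split; [apply r_top|]].
  apply (weakening D [Top]); reflexivity.
Qed.

Lemma interp_axiom_left S p X0 Y : interpolable S (Var p :: X0) Y (Var p).
Proof.
  exists (Var p). split; [vocabulary|split; [apply r_ax with X0|apply r_ax with Y]; reflexivity].
Qed.

Lemma interp_impR S X Y a b : interpolable S X (a :: Y) b -> interpolable S X Y (Imp a b).
Proof.
  intros [s [V [L R]]]. exists s. split; [vocabulary|split; [exact L|]].
  apply r_impR, (exchange R); perm_solve.
Qed.

Lemma interp_impL_left S a b X0 Y phi :
  interpolable S Y (Imp a b :: X0) a -> interpolable S (b :: X0) Y phi ->
  interpolable S (Imp a b :: X0) Y phi.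
Proof.
  intros [s1 [V1 [L1 R1]]] [s2 [V2 [L2 R2]]]. exists (Imp s1 s2). split; [vocabulary|split].
  - apply r_impR, r_impL with (s1 :: X0) a b; [perm_solve| |].
    + apply (exchange R1); perm_solve.
    + apply (weakening L2 [s1]); perm_solve.
  - apply r_impL with Y s1 s2; [reflexivity| |exact R2].
    apply (weakening L1 [Imp s1 s2]); reflexivity.
Qed.

Lemma interp_impL_right S a b X Y0 phi :
  interpolable S X (Imp a b :: Y0) a -> interpolable S X (b :: Y0) phi ->
  interpolable S X (Imp a b :: Y0) phi.
Proof.
  intros [s1 [V1 [L1 R1]]] [s2 [V2 [L2 R2]]]. exists (And s1 s2). split; [vocabulary|split].
  - apply r_andR; assumption.
  - apply r_andL with (Imp a b :: Y0) s1 s2; [reflexivity|].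
    apply r_impL with (s1 :: s2 :: Y0) a b; [perm_solve| |].
    + apply (weakening R1 [s2]); perm_solve.
    + apply (weakening R2 [s1]); perm_solve.
Qed.

Lemma interp_andR S X Y a b :
  interpolable S X Y a -> interpolable S X Y b -> interpolable S X Y (And a b).
Proof.
  intros [s1 [V1 [L1 R1]]] [s2 [V2 [L2 R2]]]. exists (And s1 s2). split; [vocabulary|split].
  - apply r_andR; assumption.
  - apply r_andR; apply r_andL with Y s1 s2; try reflexivity.
    + apply (weakening R1 [s2]); perm_solve.
    + apply (weakening R2 [s1]); perm_solve.
Qed.

Lemma interp_andL_left S a b X0 Y phi :
  interpolable S (a :: b :: X0) Y phi -> interpolable S (And a b :: X0) Y phi.
Proof.
  intros [s [V [L R]]]. exists s. split; [vocabulary|split; [|exact R]].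
  apply r_andL with X0 a b; [reflexivity|exact L].
Qed.

Lemma interp_andL_right S a b X Y0 phi :
  interpolable S X (a :: b :: Y0) phi -> interpolable S X (And a b :: Y0) phi.
Proof.
  intros [s [V [L R]]]. exists s. split; [vocabulary|split; [exact L|]].
  apply r_andL with (s :: Y0) a b; [perm_solve|apply (exchange R); perm_solve].
Qed.

Lemma interp_orR1 S X Y a b : interpolable S X Y a -> interpolable S X Y (Or a b).
Proof.
  intros [s [V [L R]]]. exists s. split; [vocabulary|split; [exact L|apply r_orR1, R]].
Qed.

Lemma interp_orR2 S X Y a b : interpolable S X Y b -> interpolable S X Y (Or a b).
Proof.
  intros [s [V [L R]]]. exists s. split; [vocabulary|split; [exact L|apply r_orR2, R]].
Qed.

Lemma interp_orL_left S a b X0 Y phi :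
  interpolable S (a :: X0) Y phi -> interpolable S (b :: X0) Y phi ->
  interpolable S (Or a b :: X0) Y phi.
Proof.
  intros [s1 [V1 [L1 R1]]] [s2 [V2 [L2 R2]]]. exists (Or s1 s2). split; [vocabulary|split].
  - apply r_orL with X0 a b; [reflexivity|apply r_orR1, L1|apply r_orR2, L2].
  - apply r_orL with Y s1 s2; [reflexivity|exact R1|exact R2].
Qed.

Lemma interp_orL_right S a b X Y0 phi :
  interpolable S X (a :: Y0) phi -> interpolable S X (b :: Y0) phi ->
  interpolable S X (Or a b :: Y0) phi.
Proof.
  intros [s1 [V1 [L1 R1]]] [s2 [V2 [L2 R2]]]. exists (And s1 s2). split; [vocabulary|split].
  - apply r_andR; assumption.
  - apply r_andL with (Or a b :: Y0) s1 s2; [reflexivity|].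
    apply r_orL with (s1 :: s2 :: Y0) a b; [perm_solve| |].
    + apply (weakening R1 [s2]); perm_solve.
    + apply (weakening R2 [s1]); perm_solve.
Qed.

(* Rule (n) with its principal formula Neg a on the X side: the premises are
   split with the roles of the two sides exchanged in the first one, giving
   Y, b => s1 => a  and  Neg a, a => s2 => b; the interpolant
   (s1 -> s2) /\ ((s2 -> s1) -> Neg s1)  recombines them, by cuts on a and b. *)
Lemma interp_n_left S a b X0 Y : has_n S = true ->
  interpolable S (b :: Y) (Neg a :: X0) a -> interpolable S (Neg a :: a :: X0) Y b ->
  interpolable S (Neg a :: X0) Y (Neg b).
Proof.
  intros Hn [s1 [V1 [L1 R1]]] [s2 [V2 [L2 R2]]].
  exists (And (Imp s1 s2) (Imp (Imp s2 s1) (Neg s1))). split; [vocabulary|split].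
  - apply r_andR; apply r_impR.
    + apply (cut_admissibility S a); [apply (exchange R1); perm_solve|].
      apply (weakening L2 [s1]); perm_solve.
    + apply r_n with (Imp s2 s1 :: X0) a; [exact Hn|perm_solve| |].
      * apply (weakening R1 [Imp s2 s1]); perm_solve.
      * apply r_impL with (Neg a :: a :: X0) s2 s1; [perm_solve| |apply identity].
        apply (weakening L2 [Imp s2 s1]); perm_solve.
  - apply r_andL with Y (Imp s1 s2) (Imp (Imp s2 s1) (Neg s1)); [reflexivity|].
    apply r_impL with (Imp s1 s2 :: Y) (Imp s2 s1) (Neg s1); [perm_solve| |].
    + apply r_impR, (cut_admissibility S b).
      * apply (weakening R2 [Imp (Imp s2 s1) (Neg s1); Imp s1 s2]); perm_solve.
      * apply (weakening L1 [s2; Imp (Imp s2 s1) (Neg s1); Imp s1 s2]); perm_solve.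
    + apply r_n with (Imp s1 s2 :: Y) s1; [exact Hn|perm_solve| |].
      * apply (weakening L1 [Imp s1 s2; Neg s1]); perm_solve.
      * apply r_impL with (Neg s1 :: s1 :: Y) s1 s2; [perm_solve| |].
        -- apply (exchange (identity S s1 (Imp s1 s2 :: Neg s1 :: Y))); perm_solve.
        -- apply (weakening R2 [Neg s1; s1]); perm_solve.
Qed.

Lemma interp_n_right S a b X Y0 : has_n S = true ->
  interpolable S X (Neg a :: b :: Y0) a -> interpolable S X (Neg a :: a :: Y0) b ->
  interpolable S X (Neg a :: Y0) (Neg b).
Proof.
  intros Hn [s1 [V1 [L1 R1]]] [s2 [V2 [L2 R2]]]. exists (And s1 s2). split; [vocabulary|split].
  - apply r_andR; assumption.
  - apply r_andL with (Neg a :: Y0) s1 s2; [reflexivity|].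
    apply r_n with (s1 :: s2 :: Y0) a; [exact Hn|perm_solve| |].
    + apply (weakening R1 [s2]); perm_solve.
    + apply (weakening R2 [s1]); perm_solve.
Qed.

(* Rule (nef) on the X side: the X side is "inconsistent" given s1, which
   s1 -> Neg Top expresses in the common language. *)
Lemma interp_nef_left S a b X0 Y : has_nef S = true ->
  interpolable S Y (Neg a :: X0) a -> interpolable S (Neg a :: X0) Y (Neg b).
Proof.
  intros Hnef [s1 [V1 [L1 R1]]]. exists (Imp s1 (Neg Top)). split; [vocabulary|split].
  - apply r_impR, r_nef with (s1 :: X0) a; [exact Hnef|perm_solve|].
    apply (exchange R1); perm_solve.
  - apply r_impL with Y s1 (Neg Top); [reflexivity| |].
    + apply (weakening L1 [Imp s1 (Neg Top)]); reflexivity.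
    + apply r_nef with Y Top; [exact Hnef|reflexivity|apply r_top].
Qed.

Lemma interp_nef_right S a b X Y0 : has_nef S = true ->
  interpolable S X (Neg a :: Y0) a -> interpolable S X (Neg a :: Y0) (Neg b).
Proof.
  intros Hnef [s [V [L R]]]. exists s. split; [vocabulary|split; [exact L|]].
  apply r_nef with (s :: Y0) a; [exact Hnef|perm_solve|apply (exchange R); perm_solve].
Qed.

Lemma interp_copc_left S a b X0 Y : has_copc S = true ->
  interpolable S (b :: Y) (Neg a :: X0) a -> interpolable S (Neg a :: X0) Y (Neg b).
Proof.
  intros Hc [s1 [V1 [L1 R1]]]. exists (Neg s1). split; [vocabulary|split].
  - apply r_copc with X0 a; [exact Hc|reflexivity|apply (exchange R1); perm_solve].
  - apply r_copc with Y s1; [exact Hc|reflexivity|apply (weakening L1 [Neg s1]); reflexivity].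
Qed.

Lemma interp_copc_right S a b X Y0 : has_copc S = true ->
  interpolable S X (Neg a :: b :: Y0) a -> interpolable S X (Neg a :: Y0) (Neg b).
Proof.
  intros Hc [s [V [L R]]]. exists s. split; [vocabulary|split; [exact L|]].
  apply r_copc with (s :: Y0) a; [exact Hc|perm_solve|apply (exchange R); perm_solve].
Qed.

Lemma interp_an S a X Y : has_an S = true ->
  interpolable S X (a :: Y) (Neg a) -> interpolable S X Y (Neg a).
Proof.
  intros Ha [s [V [L R]]]. exists s. split; [vocabulary|split; [exact L|]].
  apply r_an; [exact Ha|apply (exchange R); perm_solve].
Qed.

Lemma interpolation S ctx phi : deriv S ctx phi ->
  forall X Y, Permutation ctx (X ++ Y) -> interpolable S X Y phi.
Proof.
  intro D; deriv_induction D; intros X Y HXY;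
    try (destruct (perm_cons_app_cases _ _ _ _ (perm_trans (Permutation_sym Hp) HXY))
           as [[X0 [HX HG]]|[Y0 [HY HG]]];
         [eapply (interpolable_perm S (_ :: X0) Y); [ |symmetry; exact HX|reflexivity]
         |eapply (interpolable_perm S X (_ :: Y0)); [ |reflexivity|symmetry; exact HY]]).
  - apply interp_axiom_left.
  - apply interp_from_right, r_ax with Y0; reflexivity.
  - apply interp_from_right, r_top.
  - apply interp_impR, IH; perm_solve.
  - apply interp_impL_left; [apply IH1|apply IH2]; perm_solve.
  - apply interp_impL_right; [apply IH1|apply IH2]; perm_solve.
  - apply interp_andR; [apply IH1|apply IH2]; exact HXY.
  - apply interp_andL_left, IH; perm_solve.
  - apply interp_andL_right, IH; perm_solve.
  - apply interp_orR1, IH, HXY.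
  - apply interp_orR2, IH, HXY.
  - apply interp_orL_left; [apply IH1|apply IH2]; perm_solve.
  - apply interp_orL_right; [apply IH1|apply IH2]; perm_solve.
  - apply interp_n_left; [exact Hf|apply IH1|apply IH2]; perm_solve.
  - apply interp_n_right; [exact Hf|apply IH1|apply IH2]; perm_solve.
  - apply interp_nef_left; [exact Hf|apply IH]; perm_solve.
  - apply interp_nef_right; [exact Hf|apply IH]; perm_solve.
  - apply interp_copc_left; [exact Hf|apply IH]; perm_solve.
  - apply interp_copc_right; [exact Hf|apply IH]; perm_solve.
  - apply interp_an; [exact Hf|apply IH]; perm_solve.
Qed.

(* Theorem 4.3 (Craig interpolation). *)
Theorem theorem4p3 (S : system) (G D : list formula) (phi : formula) :
  (exists p, common_lang G D phi p) ->
  deriv S (G ++ D) phi ->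
  exists sigma : formula,
    (forall p, occurs p sigma -> common_lang G D phi p) /\
    deriv S G sigma /\ deriv S (sigma :: D) phi.
Proof.
  intros _ Hder. exact (interpolation S _ _ Hder G D (Permutation_refl _)).
Qed.
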